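(* Let $G>0$, $a\ge\frac{3\pi G^2}{4}$, $\sigma^2=\pi/2$, and let $(\beta_t)_{t\ge1}$ be positive reals with $\beta_{t+1}\le\beta_t$ for all $t$. For $t\ge1$ define $f_t(x)=\beta_t\exp\big(\frac{x^2}{2at}\big)$. Then for every $t\ge1$, \[ \arg\max_{x\in\mathbb{R}}\ \Big(\mathbb{E}_{\phi\sim N(0,\sigma^2)}\big[f_{t+1}(x+\phi G)\big]-f_t(x)\Big)=0, \] i.e. the maximum over $x$ is attained at $x=0$. *)

From HB Require Import structures.
From mathcomp Require Import all_boot all_order all_algebra.
From mathcomp Require Import all_classical all_reals all_analysis.
Set Implicit Arguments. Unset Strict Implicit. Unset Printing Implicit Defensive.
Import Order.TTheory GRing.Theory Num.Theory.
Local Open Scope ring_scope.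

Definition ft {R : realType} (beta : nat -> R) (a : R) (t : nat) (x : R) : R :=
  beta t * expR (x ^+ 2 / (2 * a * t%:R)).

(* E_{phi ~ N(0, sigma^2)} [ f_{t+1}(x + phi G) ] - f_t(x), as an extended real;
   sigma is the standard deviation. *)
Definition objective {R : realType} (beta : nat -> R) (a G sigma : R) (t : nat)
  (x : R) : \bar R :=
  ((\int[normal_prob 0 sigma]_phi (ft beta a t.+1 (x + phi * G))%:E)
    - (ft beta a t x)%:E)%E.

From HB Require Import structures.
From mathcomp Require Import all_boot all_order all_algebra.
From mathcomp Require Import all_classical all_reals all_analysis.
From mathcomp Require Import measurable_realfun normal_distribution.
From mathcomp Require Import lra ring.
Import Order.TTheory GRing.Theory Num.Theory.
Local Open Scope ring_scope.

(* The Gaussian average of [exp (y^2 / c)] is again of this form: averaging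
   [f_(t+1)] against [N(0, s^2)] gives [beta_(t+1) K exp (x^2 / D)] with
   [D = 2a(t+1) - 2 G^2 s^2 = 2a(t+1) - pi G^2] and [K = sqrt(2a(t+1) / D)].
   Hence the objective is [h(u) = beta_(t+1) K e^(u/D) - beta_t e^(u/(2at))]
   at [u = x^2 >= 0], and [h u <= h 0] follows from convexity of [exp] once
   [1/D <= 1/(2at)] and [K/D <= 1/(2at)]; the latter is the cubic inequality
   [2a(t+1) (2at)^2 <= D^3], which is where [a >= 3 pi G^2 / 4] is used. *)

Lemma ge0_integral_normal_prob (R : realType) (m s : R) (f : _ -> \bar R) :
  measurable_fun setT f -> (forall x, 0 <= f x)%E ->
  (\int[normal_prob m s]_x f x
   = \int[lebesgue_measure]_x (f x * (normal_pdf m s x)%:E))%E.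
Proof.
move=> mf f0; have dom := normal_prob_dominates m s.
rewrite -(Radon_Nikodym_SigmaFinite.change_of_variables dom)//.
have mpdf : measurable_fun setT (EFin \o normal_pdf m s).
  by apply/measurable_EFinP; exact: measurable_normal_pdf.
apply: ae_eq_integral => //.
- apply: emeasurable_funM => //.
  exact/measurable_int/(Radon_Nikodym_SigmaFinite.f_integrable dom).
- exact: emeasurable_funM.
apply: ae_eqe_mul2l; apply: integral_ae_eq => //.
- exact: Radon_Nikodym_SigmaFinite.f_integrable.
- by move=> E _ mE; rewrite -Radon_Nikodym_SigmaFinite.f_integral.
Qed.

Lemma normal_peak_ratio (R : realType) (s r : R) : s != 0 ->
  normal_peak s / normal_peak r = `|r| / `|s|.
Proof.
move=> s0; have pi0 : 0 < pi :> R := pi_gt0 R.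
have k0 : 0 < Num.sqrt (pi *+ 2) :> R by rewrite sqrtr_gt0 mulrn_wgt0.
rewrite /normal_peak invrK -!mulrnAr !(sqrtrM _ (sqr_ge0 _)) !sqrtr_sqr.
by field; rewrite normr_eq0 s0 gt_eqF.
Qed.

Lemma measurable_expR_sqr_shift (R : realType) (c G x : R) :
  measurable_fun setT (fun phi : R => expR ((x + phi * G) ^+ 2 / c)).
Proof.
apply: measurableT_comp => //; apply: measurable_funM => //.
by apply: measurable_funX; apply: measurable_funD => //; exact: measurable_funM.
Qed.

Section gaussian_expR_sqr.
Variables (R : realType) (c G s : R).
Hypotheses (s_gt0 : 0 < s) (D_gt0 : 0 < c - 2 * G ^+ 2 * s ^+ 2).
Local Notation D := (c - 2 * G ^+ 2 * s ^+ 2).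

Let c_gt0 : 0 < c.
Proof. by move: D_gt0 (sqr_ge0 G) (sqr_ge0 s); nra. Qed.

Lemma expR_sqr_normal_pdf (x phi : R) :
  expR ((x + phi * G) ^+ 2 / c) * normal_pdf 0 s phi =
  Num.sqrt (c / D) * expR (x ^+ 2 / D)
  * normal_pdf (2 * x * G * s ^+ 2 / D) (Num.sqrt (s ^+ 2 * c / D)) phi.
Proof.
set w := s ^+ 2 * c / D.
have w_gt0 : 0 < w by rewrite divr_gt0 // mulr_gt0 // exprn_gt0.
have sw_gt0 : 0 < Num.sqrt w by rewrite sqrtr_gt0.
have peakE : Num.sqrt (c / D) = normal_peak s / normal_peak (Num.sqrt w).
  rewrite normal_peak_ratio ?gt_eqF // !gtr0_norm //.
  have -> : c / D = (Num.sqrt w / s) ^+ 2.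
    by rewrite expr_div_n sqr_sqrtr ?ltW // /w; field; rewrite !gt_eqF.
  by rewrite sqrtr_sqr gtr0_norm ?divr_gt0.
have expE : expR ((x + phi * G) ^+ 2 / c) * expR (- (phi - 0) ^+ 2 / (s ^+ 2 *+ 2))
    = expR (x ^+ 2 / D) * expR (- (phi - 2 * x * G * s ^+ 2 / D) ^+ 2 / (w *+ 2)).
  by rewrite -!expRD /w; congr expR; field; rewrite !gt_eqF.
rewrite !normal_pdfE ?gt_eqF // /normal_fun sqr_sqrtr ?ltW // mulrCA expE peakE.
by field; rewrite gt_eqF ?normal_peak_gt0 ?gt_eqF.
Qed.

Lemma integral_normal_prob_expR_sqr (x : R) :
  (\int[normal_prob 0 s]_phi (expR ((x + phi * G) ^+ 2 / c))%:E
   = (Num.sqrt (c / D) * expR (x ^+ 2 / D))%:E)%E.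
Proof.
rewrite ge0_integral_normal_prob; last 2 first.
- by apply/measurable_EFinP; exact: measurable_expR_sqr_shift.
- by move=> phi; rewrite lee_fin expR_ge0.
under eq_integral do rewrite -EFinM expR_sqr_normal_pdf EFinM.
rewrite integralZl //; last exact: integrable_normal_pdf.
by rewrite integral_normal_pdf mule1.
Qed.

End gaussian_expR_sqr.

Lemma objectiveE (R : realType) (beta : nat -> R) (a G s : R) (t : nat) (y : R) :
  0 < s -> 0 <= beta t.+1 ->
  let D := 2 * a * t.+1%:R - 2 * G ^+ 2 * s ^+ 2 in 0 < D ->
  objective beta a G s t y
  = (beta t.+1 * Num.sqrt (2 * a * t.+1%:R / D) * expR (y ^+ 2 / D)
     - ft beta a t y)%:E.
Proof.
move=> s_gt0 b_ge0 D D_gt0; rewrite /objective /ft.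
under eq_integral do rewrite EFinM.
rewrite ge0_integralZl //; last first.
  by apply/measurable_EFinP; exact: measurable_expR_sqr_shift.
by rewrite integral_normal_prob_expR_sqr // -EFinM -EFinB mulrA.
Qed.

Lemma expR_mul_le_convex (R : realType) (r y : R) : 0 <= r -> r <= 1 ->
  expR (r * y) <= r * expR y + (1 - r).
Proof.
move=> r0 r1; have := convex_expR (Itv01 r0 r1) y 0.
by rewrite !convRE /= mulr0 addr0 expR0 mulr1.
Qed.

Lemma expR_gap_le (R : realType) (b' b K p q u : R) :
  0 <= b' -> b' <= b -> 0 <= K -> 0 < p -> p <= q -> K * p <= q -> 0 <= u ->
  b' * K * expR (u * p) - b * expR (u * q) <= b' * K - b.
Proof.
move=> b'0 b'b K0 p0 pq Kpq u0; have q0 : 0 < q := lt_le_trans p0 pq.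
set r := p / q.
have r0 : 0 <= r by rewrite divr_ge0 // ltW.
have r1 : r <= 1 by rewrite ler_pdivrMr // mul1r.
have Kr : K * r <= 1 by rewrite mulrA ler_pdivrMr // mul1r.
have Ep_le : expR (u * p) <= r * expR (u * q) + (1 - r).
  have -> : u * p = r * (u * q) by rewrite /r; field; rewrite gt_eqF.
  exact: expR_mul_le_convex.
have Eq_ge1 : 1 <= expR (u * q) by rewrite -expR0 ler_expR mulr_ge0 // ltW.
set Ep := expR (u * p) in Ep_le *; set Eq := expR (u * q) in Ep_le Eq_ge1 *.
have h1 : b' * K * (Ep - 1) <= b' * K * (r * (Eq - 1)).
  by apply: ler_wpM2l; [exact: mulr_ge0 | lra].
have h2 : b' * K * (r * (Eq - 1)) <= b * (Eq - 1).
  rewrite mulrA -[b' * K * r]mulrA; apply: ler_wpM2r; first lra.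
  by rewrite -[b]mulr1 ler_pM // mulr_ge0.
by move: h1 h2; lra.
Qed.

(* Expanding: the difference of the two sides is [8 a^3 (t/3 + 1/27) >= 0]
   once [g] is replaced by its maximal value [4a/3]. *)
Lemma mul_sqr_le_cube_sub (R : realType) (a t g : R) :
  0 <= a -> 0 <= t -> 0 <= g -> g <= 4 * a / 3 ->
  2 * a * (t + 1) * (2 * a * t) ^+ 2 <= (2 * a * (t + 1) - g) ^+ 3.
Proof.
move=> a0 t0 g0 ga.
have Y0 : 0 <= 2 * a * (t + 1 / 3) by rewrite mulr_ge0 ?mulr_ge0 //; lra.
have YD : (2 * a * (t + 1 / 3)) ^+ 3 <= (2 * a * (t + 1) - g) ^+ 3.
  by rewrite ler_pXn2r // ?nnegrE //; lra.
apply: le_trans YD.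
have -> : (2 * a * (t + 1 / 3)) ^+ 3
    = 2 * a * (t + 1) * (2 * a * t) ^+ 2 + 8 * a ^+ 3 * (t / 3 + 1 / 27).
  by field.
by rewrite lerDl mulr_ge0 ?mulr_ge0 ?exprn_ge0 //; lra.
Qed.

Lemma sqrt_divr_divr_le (R : realType) (c m D : R) :
  0 < m -> 0 < D -> c * m ^+ 2 <= D ^+ 3 -> Num.sqrt (c / D) / D <= m^-1.
Proof.
move=> m0 D0 cmD.
rewrite ler_pdivrMr // -[m^-1 * D]gtr0_norm ?mulr_gt0 ?invr_gt0 //.
rewrite -sqrtr_sqr ler_sqrt ?sqr_ge0 // ler_pdivrMr //.
rewrite -(ler_pM2r (exprn_gt0 2 m0)).
suff -> : (m^-1 * D) ^+ 2 * D * m ^+ 2 = D ^+ 3 by [].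
by field; rewrite gt_eqF.
Qed.

Theorem lemma17 (R : realType) (G a : R) (beta : nat -> R) :
  0 < G ->
  3 * pi * G ^+ 2 / 4 <= a ->
  (forall t, (1 <= t)%N -> 0 < beta t) ->
  (forall t, (1 <= t)%N -> beta t.+1 <= beta t) ->
  forall t, (1 <= t)%N ->
  forall x : R,
    (objective beta a G (Num.sqrt (pi / 2)) t x
      <= objective beta a G (Num.sqrt (pi / 2)) t 0)%E.
Proof.
move=> G_gt0 a_ge beta_gt0 beta_le t t_ge1 x.
set s := Num.sqrt (pi / 2); set g := pi * G ^+ 2.
have pi_gt0 : 0 < pi :> R := pi_gt0 R.
have s_gt0 : 0 < s by rewrite sqrtr_gt0 divr_gt0.
have g_gt0 : 0 < g by rewrite mulr_gt0 ?exprn_gt0.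
have g_le : g <= 4 * a / 3 by rewrite /g; lra.
have t_ge1R : 1 <= t%:R :> R by rewrite ler1n.
have DE : 2 * a * t.+1%:R - 2 * G ^+ 2 * s ^+ 2 = 2 * a * (t%:R + 1) - g.
  by rewrite sqr_sqrtr ?divr_ge0 ?(ltW pi_gt0) // -[t.+1%:R]natr1 /g; field.
have a_gt0 : 0 < a by lra.
have D_gt0 : 0 < 2 * a * (t%:R + 1) - g by nra.
have m_gt0 : 0 < 2 * a * t%:R by rewrite !mulr_gt0 //; lra.
rewrite !objectiveE ?DE // ?(ltW (beta_gt0 _ _)) // /ft.
rewrite [0 ^+ 2]expr2 !mul0r expR0 !mulr1 lee_fin.
apply: expR_gap_le; rewrite ?(ltW (beta_gt0 _ _)) ?beta_le ?sqr_ge0 ?sqrtr_ge0 //.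
- by rewrite invr_gt0.
- by rewrite lef_pV2 ?posrE //; lra.
- apply: sqrt_divr_divr_le => //.
  by rewrite -[t.+1%:R]natr1; apply: mul_sqr_le_cube_sub; lra.
Qed.
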